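(* Let $(\Omega,+)$ be a group and $a,b,c$ subgroups such that $a\top b$ and $a,b$ commute elementwise. Then $(a,b,c)$ is a transversal triple (i.e. additionally $b\top c$ and $c\top a$) if and only if there is a group isomorphism $\Omega\cong a\times a$ under which $a$ corresponds to the first factor, $b$ to the second factor and $c$ to the diagonal. Moreover, in this case, the set $U'_{ab}:=U_{ab}\cap\mathit{Gras}(\Omega)$ is a torsor (subtorsor of $U_{ab}$) which, taking $c$ as base point, is isomorphic to the group $\mathrm{Aut}(a)$ of group automorphisms of $a$.
   Context: $(\Omega,+)$ is a group written additively but not necessarily abelian; $\mathit{Gras}(\Omega)$ is the set of subgroups. For subsets $x,y$, $x\top y$ means every $\omega\in\Omega$ has a unique decomposition $\omega=\xi+\eta$ with $\xi\in x,\eta\in y$. $U_{ab}$ is the set $\{x\subseteq\Omega: a\top x,\ x\top b\}$ with the torsor law $(x,y,z)\mapsto\Gamma(x,a,y,b,z)$, where $\Gamma(x,a,y,b,z)=\{\omega:\exists\alpha\in a,\beta\in b:\ \alpha+\omega+\beta\in y,\ \alpha+\omega\in z,\ \omega+\beta\in x\}$. A torsor with base point $c$ is regarded as the group with product $xz:=\Gamma(x,a,c,b,z)$ and neutral element $c$. *)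

(* A (not necessarily abelian) group written additively. *)
Set Implicit Arguments.
Unset Strict Implicit.

Record Grp := MkGrp {
  carrier :> Type;
  gadd : carrier -> carrier -> carrier;
  gzero : carrier;
  gopp : carrier -> carrier;
  gaddA : forall x y z, gadd x (gadd y z) = gadd (gadd x y) z;
  gadd0l : forall x, gadd gzero x = x;
  gaddNl : forall x, gadd (gopp x) x = gzero
}.

Arguments gadd {g} _ _.
Arguments gzero {g}.
Arguments gopp {g} _.

Declare Scope grp_scope.
Delimit Scope grp_scope with grp.
Infix "+" := gadd : grp_scope.
Local Open Scope grp_scope.

Definition subset (O : Grp) := O -> Prop.

Definition is_subgroup (O : Grp) (x : subset O) : Prop :=
  x gzero /\ (forall u v, x u -> x v -> x (u + v)) /\ (forall u, x u -> x (gopp u)).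

Definition top (O : Grp) (x y : subset O) : Prop :=
  forall w : O, exists xi eta, x xi /\ y eta /\ w = xi + eta /\
    (forall xi' eta', x xi' -> y eta' -> w = xi' + eta' -> xi' = xi /\ eta' = eta).

Definition Gamma (O : Grp) (x a y b z : subset O) : subset O :=
  fun w => exists alpha beta, a alpha /\ b beta /\
    y ((alpha + w) + beta) /\ z (alpha + w) /\ x (w + beta).

Definition U (O : Grp) (a b : subset O) : subset O -> Prop :=
  fun x => top a x /\ top x b.

Definition U' (O : Grp) (a b : subset O) : subset O -> Prop :=
  fun x => U a b x /\ is_subgroup x.

Definition is_hom_pair (O : Grp) (phi : O -> O * O) : Prop :=
  forall u v, phi (u + v) = (fst (phi u) + fst (phi v), snd (phi u) + snd (phi v)).

(* An automorphism of the subgroup a, represented by a map f : O -> O whose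
   restriction to a matters; two such maps are identified iff they agree on a. *)
Definition is_aut_of (O : Grp) (a : subset O) (f : O -> O) : Prop :=
  (forall u, a u -> a (f u)) /\
  (forall u v, a u -> a v -> f (u + v) = f u + f v) /\
  (forall v, a v -> exists u, a u /\ f u = v /\ (forall u', a u' -> f u' = v -> u' = u)).

From Stdlib Require Import ClassicalEpsilon FunctionalExtensionality PropExtensionality.

(* Since [a] and [b] commute and [a ⊤ b], [O] is the internal direct product [a × b], with
   projections [pa] and [pb].  A subgroup [X] is a common complement of [a] and [b]
   ([X ∈ U'_ab]) exactly when it is the graph [{w | pa w = h (pb w)}] of an isomorphism
   [h : b -> a].  For [X = c] this yields the coordinates [w ↦ (pa w, h_c (pb w))] identifying
   [O] with [a × a] and [c] with the diagonal; conversely the diagonal of [a × a] is a common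
   complement of the two factors.  On graphs, [Γ(X, a, Y, b, Z)] is the graph of
   [h_X ∘ h_Y⁻¹ ∘ h_Z], so [X ↦ h_X ∘ h_c⁻¹] maps the torsor [U'_ab] based at [c]
   isomorphically onto [Aut(a)]. *)

Local Open Scope grp_scope.

Section GroupLaws.
Context {O : Grp}.
Implicit Types x y z : O.

Lemma gadd_idem x : x + x = x -> x = gzero.
Proof. intro H. rewrite <- (gadd0l x) at 1. rewrite <- (gaddNl x), <- gaddA, H. reflexivity. Qed.

Lemma gaddNr x : x + gopp x = gzero.
Proof.
  apply gadd_idem.
  rewrite <- (gaddA x (gopp x) (x + gopp x)), (gaddA (gopp x) x (gopp x)), gaddNl, gadd0l.
  reflexivity.
Qed.

Lemma gadd0r x : x + gzero = x.
Proof. rewrite <- (gaddNl x), gaddA, gaddNr, gadd0l. reflexivity. Qed.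

Lemma gaddKl x y : gopp x + (x + y) = y.
Proof. rewrite gaddA, gaddNl, gadd0l. reflexivity. Qed.

Lemma gaddKr x y : x + (gopp x + y) = y.
Proof. rewrite gaddA, gaddNr, gadd0l. reflexivity. Qed.

Lemma gaddI x y z : z + x = z + y -> x = y.
Proof. intro H. rewrite <- (gaddKl z x), H, gaddKl. reflexivity. Qed.

Lemma goppK x : gopp (gopp x) = x.
Proof. apply (gaddI _ _ (gopp x)). rewrite gaddNr, gaddNl. reflexivity. Qed.

Lemma goppD x y : gopp (x + y) = gopp y + gopp x.
Proof. apply (gaddI _ _ (x + y)). rewrite gaddNr, <- gaddA, gaddKr, gaddNr. reflexivity. Qed.

Lemma gopp0 : gopp (@gzero O) = gzero.
Proof. rewrite <- (gadd0l (gopp gzero)). apply gaddNr. Qed.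

Lemma additive_zero (f : O -> O) :
  (forall x y, f (x + y) = f x + f y) -> f gzero = gzero.
Proof. intro fD. apply gadd_idem. rewrite <- fD, gadd0l. reflexivity. Qed.

End GroupLaws.

Ltac gsimp := repeat (rewrite ?goppD, ?goppK, ?gopp0, ?gadd0l, ?gadd0r, ?gaddNl, ?gaddNr,
   <- ?gaddA, ?gaddKl, ?gaddKr).
Ltac gsimpin H := repeat (rewrite ?goppD, ?goppK, ?gopp0, ?gadd0l, ?gadd0r, ?gaddNl, ?gaddNr,
   <- ?gaddA, ?gaddKl, ?gaddKr in H).

Section Subgroups.
Context {O : Grp}.
Implicit Types (x y : subset O) (u v w : O).

Lemma subgroup0 {x} : is_subgroup x -> x gzero.
Proof. intros [H _]. exact H. Qed.

Lemma subgroupD {x u v} : is_subgroup x -> x u -> x v -> x (u + v).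
Proof. intros [_ [H _]]. apply H. Qed.

Lemma subgroupN {x u} : is_subgroup x -> x u -> x (gopp u).
Proof. intros [_ [_ H]]. apply H. Qed.

End Subgroups.

Global Hint Extern 1 => (apply subgroup0; assumption) : subgroup.
Global Hint Extern 2 => (apply subgroupD; [assumption | |]) : subgroup.
Global Hint Extern 2 => (apply subgroupN; [assumption |]) : subgroup.
Ltac memb := solve [eauto with subgroup].

Section Transversality.
Context {O : Grp}.
Implicit Types (a b c x y : subset O) (u v w : O).

Lemma top_meet0 {x y} : is_subgroup x -> is_subgroup y -> top x y ->
  forall u, x u -> y u -> u = gzero.
Proof.
  intros Hx Hy T u xu yu. destruct (T u) as [xi [eta [_ [_ [_ uniq]]]]].
  destruct (uniq u gzero xu (subgroup0 Hy) (eq_sym (gadd0r u))) as [E1 _].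
  destruct (uniq gzero u (subgroup0 Hx) yu (eq_sym (gadd0l u))) as [E2 _].
  congruence.
Qed.

Lemma top_intro {x y} : is_subgroup x -> is_subgroup y ->
  (forall w, exists xi eta, x xi /\ y eta /\ w = xi + eta) ->
  (forall u, x u -> y u -> u = gzero) -> top x y.
Proof.
  intros Hx Hy decomp meet0 w. destruct (decomp w) as [xi [eta [xxi [yeta E]]]].
  exists xi, eta. split; [exact xxi | split; [exact yeta | split; [exact E |]]].
  intros xi' eta' xxi' yeta' E'. rewrite E in E'.
  assert (Hd : gopp xi + xi' = eta + gopp eta').
  { rewrite <- (gadd0r xi'), <- (gaddNr eta'), (gaddA xi'), <- E'. gsimp. reflexivity. }
  assert (Hd0 : gopp xi + xi' = gzero) by (apply meet0; [memb | rewrite Hd; memb]).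
  assert (Exi : xi' = xi) by (rewrite <- (gaddKr xi xi'), Hd0, gadd0r; reflexivity).
  subst xi'. split; [reflexivity |]. symmetry. exact (gaddI _ _ _ E').
Qed.

Lemma top_sym {x y} : is_subgroup x -> is_subgroup y -> top x y -> top y x.
Proof.
  intros Hx Hy T. apply top_intro; [exact Hy | exact Hx | |].
  - intro w. destruct (T (gopp w)) as [xi [eta [xxi [yeta [E _]]]]].
    exists (gopp eta), (gopp xi). split; [memb | split; [memb |]].
    rewrite <- (goppK w), E, goppD. reflexivity.
  - intros u yu xu. exact (top_meet0 Hx Hy T u xu yu).
Qed.

Lemma U'_of_tops {a b c} : is_subgroup a -> is_subgroup b -> is_subgroup c ->
  top b c -> top c a -> U' a b c.
Proof.
  intros Ha Hb Hc Tbc Tca.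
  split; [split; [exact (top_sym Hc Ha Tca) | exact (top_sym Hb Hc Tbc)] | exact Hc].
Qed.

End Transversality.

Section Isomorphisms.
Context {O : Grp}.
Implicit Types (A B C : subset O) (f g : O -> O) (u v : O).

(* Same shape as [is_aut_of], so that [is_aut_of a f] is convertible to [is_iso a a f]. *)
Definition is_iso A B f : Prop :=
  (forall u, A u -> B (f u)) /\
  (forall u v, A u -> A v -> f (u + v) = f u + f v) /\
  (forall v, B v -> exists u, A u /\ f u = v /\ (forall u', A u' -> f u' = v -> u' = u)).

Lemma iso_map {A B f u} : is_iso A B f -> A u -> B (f u).
Proof. intros [H _]. apply H. Qed.

Lemma iso_add {A B f u v} : is_iso A B f -> A u -> A v -> f (u + v) = f u + f v.
Proof. intros [_ [H _]]. apply H. Qed.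

Lemma iso_surj {A B f v} : is_iso A B f -> B v -> exists u, A u /\ f u = v.
Proof. intros [_ [_ H]] Bv. destruct (H v Bv) as [u [Au [E _]]]. exists u. auto. Qed.

Lemma iso_inj {A B f u v} : is_iso A B f -> A u -> A v -> f u = f v -> u = v.
Proof.
  intros [fA [_ H]] Au Av E. destruct (H (f u) (fA u Au)) as [w [_ [_ uniq]]].
  rewrite (uniq u Au eq_refl), (uniq v Av (eq_sym E)). reflexivity.
Qed.

Lemma iso_intro A B f :
  (forall u, A u -> B (f u)) ->
  (forall u v, A u -> A v -> f (u + v) = f u + f v) ->
  (forall u v, A u -> A v -> f u = f v -> u = v) ->
  (forall v, B v -> exists u, A u /\ f u = v) -> is_iso A B f.
Proof.
  intros fA fD finj fsurj. split; [exact fA | split; [exact fD |]].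
  intros v Bv. destruct (fsurj v Bv) as [u [Au E]]. exists u.
  split; [exact Au | split; [exact E |]]. intros u' Au' E'. apply finj; congruence.
Qed.

Lemma iso_zero {A B f} : is_subgroup A -> is_iso A B f -> f gzero = gzero.
Proof.
  intros HA Hf. apply gadd_idem. rewrite <- (iso_add Hf), gadd0l by memb. reflexivity.
Qed.

Lemma iso_opp {A B f u} : is_subgroup A -> is_iso A B f -> A u -> f (gopp u) = gopp (f u).
Proof.
  intros HA Hf Au. apply (gaddI _ _ (f u)).
  rewrite <- (iso_add Hf), gaddNr, gaddNr by memb. exact (iso_zero HA Hf).
Qed.

Lemma iso_comp {A B C f g} : is_iso B C f -> is_iso A B g -> is_iso A C (fun u => f (g u)).
Proof.
  intros Hf Hg. apply iso_intro.
  - intros u Au. exact (iso_map Hf (iso_map Hg Au)).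
  - intros u v Au Av. rewrite (iso_add Hg Au Av).
    exact (iso_add Hf (iso_map Hg Au) (iso_map Hg Av)).
  - intros u v Au Av E. exact (iso_inj Hg Au Av (iso_inj Hf (iso_map Hg Au) (iso_map Hg Av) E)).
  - intros w Cw. destruct (iso_surj Hf Cw) as [v [Bv Ev]]. destruct (iso_surj Hg Bv) as [u [Au Eu]].
    exists u. split; [exact Au | congruence].
Qed.

Definition inv_on A f v : O := epsilon (inhabits gzero) (fun u => A u /\ f u = v).

Lemma inv_on_spec {A B f v} : is_iso A B f -> B v -> A (inv_on A f v) /\ f (inv_on A f v) = v.
Proof. intros Hf Bv. unfold inv_on. apply epsilon_spec. exact (iso_surj Hf Bv). Qed.

Lemma inv_on_eq {A B f u v} : is_iso A B f -> A u -> f u = v -> inv_on A f v = u.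
Proof.
  intros Hf Au E. assert (Bv : B v) by (rewrite <- E; exact (iso_map Hf Au)).
  destruct (inv_on_spec Hf Bv) as [Ai Ei]. apply (iso_inj Hf Ai Au). congruence.
Qed.

Lemma iso_inv {A B f} : is_subgroup A -> is_iso A B f -> is_iso B A (inv_on A f).
Proof.
  intros HA Hf. apply iso_intro.
  - intros v Bv. exact (proj1 (inv_on_spec Hf Bv)).
  - intros v w Bv Bw.
    destruct (inv_on_spec Hf Bv) as [A1 E1]. destruct (inv_on_spec Hf Bw) as [A2 E2].
    apply (inv_on_eq Hf); [memb |]. rewrite (iso_add Hf A1 A2). congruence.
  - intros v w Bv Bw E. rewrite <- (proj2 (inv_on_spec Hf Bv)), <- (proj2 (inv_on_spec Hf Bw)), E.
    reflexivity.
  - intros u Au. exists (f u). split; [exact (iso_map Hf Au) | exact (inv_on_eq Hf Au eq_refl)].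
Qed.

End Isomorphisms.

Global Hint Extern 3 => (eapply iso_map; [eassumption |]) : subgroup.

Definition is_coordinate_iso {O : Grp} (a b c : subset O) (phi : O -> O * O) : Prop :=
  is_hom_pair phi /\
  (forall u v, phi u = phi v -> u = v) /\
  (forall w, a (fst (phi w)) /\ a (snd (phi w))) /\
  (forall p q, a p -> a q -> exists w, phi w = (p, q)) /\
  (forall w, a w <-> snd (phi w) = gzero) /\
  (forall w, b w <-> fst (phi w) = gzero) /\
  (forall w, c w <-> fst (phi w) = snd (phi w)).

Section Coordinates.
Context {O : Grp} {a b c : subset O} {phi : O -> O * O}.
Hypotheses (Ha : is_subgroup a) (Hb : is_subgroup b) (Hc : is_subgroup c)
  (Hphi : is_coordinate_iso a b c phi).
Implicit Types (p q u v w : O).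

Lemma coord_fstD u v : fst (phi (u + v)) = fst (phi u) + fst (phi v).
Proof. destruct Hphi as [hom _]. rewrite hom. reflexivity. Qed.

Lemma coord_sndD u v : snd (phi (u + v)) = snd (phi u) + snd (phi v).
Proof. destruct Hphi as [hom _]. rewrite hom. reflexivity. Qed.

Lemma coord_eq u v : fst (phi u) = fst (phi v) -> snd (phi u) = snd (phi v) -> u = v.
Proof.
  destruct Hphi as [_ [inj _]]. intros E1 E2. apply inj.
  rewrite (surjective_pairing (phi u)), (surjective_pairing (phi v)), E1, E2. reflexivity.
Qed.

Lemma coord_eq0 u : fst (phi u) = gzero -> snd (phi u) = gzero -> u = gzero.
Proof.
  intros E1 E2. apply coord_eq.
  - rewrite E1. symmetry. exact (additive_zero _ coord_fstD).
  - rewrite E2. symmetry. exact (additive_zero _ coord_sndD).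
Qed.

Lemma coord_fst_mem w : a (fst (phi w)).
Proof. destruct Hphi as [_ [_ [range _]]]. apply range. Qed.

Lemma coord_snd_mem w : a (snd (phi w)).
Proof. destruct Hphi as [_ [_ [range _]]]. apply range. Qed.

Lemma coord_surj p q : a p -> a q -> exists w, fst (phi w) = p /\ snd (phi w) = q.
Proof.
  destruct Hphi as [_ [_ [_ [surj _]]]]. intros ap aq. destruct (surj p q ap aq) as [w E].
  exists w. rewrite E. split; reflexivity.
Qed.

Local Hint Resolve coord_fst_mem coord_snd_mem : subgroup.

Lemma coordinates_top_b_c : top b c.
Proof.
  destruct Hphi as (_ & _ & _ & _ & _ & charb & charc).
  apply top_intro; [exact Hb | exact Hc | |].
  - intro w. pose proof (coord_fst_mem w) as ap. pose proof (coord_snd_mem w) as aq.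
    set (p := fst (phi w)) in *. set (q := snd (phi w)) in *.
    destruct (coord_surj gzero (q + gopp p) ltac:(memb) ltac:(memb)) as [beta [B1 B2]].
    destruct (coord_surj p p ltac:(memb) ltac:(memb)) as [g [G1 G2]].
    exists beta, g. split; [apply charb; exact B1 | split; [apply charc; congruence |]].
    apply coord_eq; rewrite ?coord_fstD, ?coord_sndD, ?B1, ?B2, ?G1, ?G2; gsimp; reflexivity.
  - intros u bu cu. apply charb in bu. apply charc in cu. apply coord_eq0; congruence.
Qed.

Lemma coordinates_top_c_a : top c a.
Proof.
  destruct Hphi as (_ & _ & _ & _ & chara & _ & charc).
  apply top_intro; [exact Hc | exact Ha | |].
  - intro w. pose proof (coord_fst_mem w) as ap. pose proof (coord_snd_mem w) as aq.
    set (p := fst (phi w)) in *. set (q := snd (phi w)) in *.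
    destruct (coord_surj q q ltac:(memb) ltac:(memb)) as [g [G1 G2]].
    destruct (coord_surj (gopp q + p) gzero ltac:(memb) ltac:(memb)) as [alpha [A1 A2]].
    exists g, alpha. split; [apply charc; congruence | split; [apply chara; exact A2 |]].
    apply coord_eq; rewrite ?coord_fstD, ?coord_sndD, ?A1, ?A2, ?G1, ?G2; gsimp; reflexivity.
  - intros u cu au. apply chara in au. apply charc in cu. apply coord_eq0; congruence.
Qed.

End Coordinates.

Section DirectProduct.
Context {O : Grp} {a b : subset O}.
Hypotheses (Ha : is_subgroup a) (Hb : is_subgroup b) (Tab : top a b)
  (Hcomm : forall alpha beta, a alpha -> b beta -> alpha + beta = beta + alpha).
Implicit Types (X Y Z : subset O) (h k : O -> O) (u v w : O).

Definition pa w : O := epsilon (inhabits gzero) (fun alpha => a alpha /\ b (gopp alpha + w)).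
Definition pb w : O := gopp (pa w) + w.

Lemma pa_spec w : a (pa w) /\ b (pb w).
Proof.
  unfold pb, pa. apply epsilon_spec. destruct (Tab w) as [x [y [ax [boy [E _]]]]].
  exists x. split; [exact ax | rewrite E; gsimp; exact boy].
Qed.

Lemma pa_mem w : a (pa w).
Proof. exact (proj1 (pa_spec w)). Qed.

Lemma pb_mem w : b (pb w).
Proof. exact (proj2 (pa_spec w)). Qed.

Lemma pa_pb w : pa w + pb w = w.
Proof. unfold pb. gsimp. reflexivity. Qed.

Local Hint Resolve pa_mem pb_mem : subgroup.

Lemma pa_pb_add {alpha beta} : a alpha -> b beta ->
  pa (alpha + beta) = alpha /\ pb (alpha + beta) = beta.
Proof.
  intros Halpha Hbeta. destruct (Tab (alpha + beta)) as [x [y [_ [_ [_ uniq]]]]].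
  destruct (uniq alpha beta Halpha Hbeta eq_refl) as [E1 E2].
  destruct (uniq (pa (alpha + beta)) (pb (alpha + beta)) (pa_mem _) (pb_mem _) (eq_sym (pa_pb _)))
    as [E3 E4].
  split; congruence.
Qed.

Lemma pa_a {w} : a w -> pa w = w.
Proof. intro aw. rewrite <- (gadd0r w) at 1. exact (proj1 (pa_pb_add aw (subgroup0 Hb))). Qed.

Lemma pb_a {w} : a w -> pb w = gzero.
Proof. intro aw. rewrite <- (gadd0r w). exact (proj2 (pa_pb_add aw (subgroup0 Hb))). Qed.

Lemma pa_b {w} : b w -> pa w = gzero.
Proof. intro bw. rewrite <- (gadd0l w). exact (proj1 (pa_pb_add (subgroup0 Ha) bw)). Qed.

Lemma pb_b {w} : b w -> pb w = w.
Proof. intro bw. rewrite <- (gadd0l w) at 1. exact (proj2 (pa_pb_add (subgroup0 Ha) bw)). Qed.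

Lemma add_decomp u v : u + v = (pa u + pa v) + (pb u + pb v).
Proof.
  rewrite <- (pa_pb u) at 1. rewrite <- (pa_pb v) at 1. rewrite <- !gaddA. f_equal.
  rewrite !gaddA. f_equal. apply eq_sym, Hcomm; memb.
Qed.

Lemma paD u v : pa (u + v) = pa u + pa v.
Proof. rewrite add_decomp. apply pa_pb_add; memb. Qed.

Lemma pbD u v : pb (u + v) = pb u + pb v.
Proof. rewrite add_decomp. apply pa_pb_add; memb. Qed.

Lemma paN u : pa (gopp u) = gopp (pa u).
Proof.
  apply (gaddI _ _ (pa u)). rewrite <- paD, !gaddNr. exact (additive_zero _ paD).
Qed.

Lemma pbN u : pb (gopp u) = gopp (pb u).
Proof.
  apply (gaddI _ _ (pb u)). rewrite <- pbD, !gaddNr. exact (additive_zero _ pbD).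
Qed.

Definition graph h : subset O := fun w => pa w = h (pb w).

Lemma graph_ext h k : (forall beta, b beta -> h beta = k beta) -> graph h = graph k.
Proof.
  intro E. apply functional_extensionality. intro w. apply propositional_extensionality.
  unfold graph. rewrite E by memb. reflexivity.
Qed.

Section Graph.
Context {h : O -> O}.
Hypothesis Hh : is_iso b a h.

Lemma graph_mem {beta} : b beta -> graph h (h beta + beta).
Proof.
  intro bb. unfold graph. destruct (pa_pb_add (iso_map Hh bb) bb) as [-> ->]. reflexivity.
Qed.

Lemma graph_subgroup : is_subgroup (graph h).
Proof.
  unfold graph. split; [| split].
  - rewrite (pa_a (subgroup0 Ha)), (pb_a (subgroup0 Ha)). symmetry. exact (iso_zero Hb Hh).
  - intros u v Hu Hv. rewrite paD, pbD, Hu, Hv. symmetry. apply (iso_add Hh); memb.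
  - intros u Hu. rewrite paN, pbN, Hu. symmetry. apply (iso_opp Hb Hh); memb.
Qed.

Lemma top_a_graph : top a (graph h).
Proof.
  apply top_intro; [exact Ha | exact graph_subgroup | |].
  - intro w. exists (pa w + gopp (h (pb w))), (h (pb w) + pb w).
    split; [memb |].
    split; [apply graph_mem; memb |]. gsimp. symmetry. apply pa_pb.
  - intros u au gu. unfold graph in gu. rewrite (pa_a au), (pb_a au), (iso_zero Hb Hh) in gu.
    exact gu.
Qed.

Lemma top_graph_b : top (graph h) b.
Proof.
  apply top_intro; [exact graph_subgroup | exact Hb | |].
  - intro w. destruct (iso_surj Hh (pa_mem w)) as [t [bt Et]].
    exists (h t + t), (gopp t + pb w). split; [apply graph_mem; exact bt | split; [memb |]].
    gsimp. rewrite Et. symmetry. apply pa_pb.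
  - intros u gu bu. unfold graph in gu. rewrite (pa_b bu), (pb_b bu), <- (iso_zero Hb Hh) in gu.
    exact (iso_inj Hh bu (subgroup0 Hb) (eq_sym gu)).
Qed.

Lemma graph_U' : U' a b (graph h).
Proof. split; [split; [exact top_a_graph | exact top_graph_b] | exact graph_subgroup]. Qed.

End Graph.

Definition graph_map X beta : O :=
  epsilon (inhabits gzero) (fun alpha => a alpha /\ X (alpha + beta)).

Section GraphMap.
Context {X : subset O}.
Hypothesis UX : U' a b X.

Let HX : is_subgroup X := proj2 UX.
Let TaX : top a X := proj1 (proj1 UX).
Let TXb : top X b := proj2 (proj1 UX).

Lemma graph_map_spec beta : a (graph_map X beta) /\ X (graph_map X beta + beta).
Proof.
  unfold graph_map. apply epsilon_spec. destruct (TaX beta) as [alpha [xi [aa [Xxi [E _]]]]].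
  exists (gopp alpha). split; [memb | rewrite E; gsimp; exact Xxi].
Qed.

Lemma graph_map_unique alpha beta : a alpha -> X (alpha + beta) -> alpha = graph_map X beta.
Proof.
  intros aa Xab. destruct (graph_map_spec beta) as [ag Xg].
  assert (E : (alpha + beta) + gopp (graph_map X beta + beta) = alpha + gopp (graph_map X beta))
    by (gsimp; reflexivity).
  assert (E0 : alpha + gopp (graph_map X beta) = gzero)
    by (apply (top_meet0 Ha HX TaX); [memb | rewrite <- E; memb]).
  rewrite <- (gadd0l (graph_map X beta)), <- E0. gsimp. reflexivity.
Qed.

Lemma graph_map_iso : is_iso b a (graph_map X).
Proof.
  apply iso_intro.
  - intros beta _. exact (proj1 (graph_map_spec beta)).
  - intros u v bu bv.
    destruct (graph_map_spec u) as [au Xu]. destruct (graph_map_spec v) as [av Xv].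
    symmetry. apply graph_map_unique; [memb |].
    replace ((graph_map X u + graph_map X v) + (u + v))
      with ((graph_map X u + u) + (graph_map X v + v)); [memb |].
    rewrite <- !gaddA. f_equal. rewrite !gaddA. f_equal. symmetry. apply Hcomm; memb.
  - intros u v bu bv E.
    destruct (graph_map_spec u) as [au Xu]. destruct (graph_map_spec v) as [av Xv].
    assert (E' : gopp (graph_map X u + u) + (graph_map X v + v) = gopp u + v)
      by (rewrite E; gsimp; reflexivity).
    assert (E0 : gopp u + v = gzero) by (apply (top_meet0 HX Hb TXb); [rewrite <- E'; memb | memb]).
    rewrite <- (gaddKr u v), E0, gadd0r. reflexivity.
  - intros alpha aa. destruct (TXb alpha) as [xi [beta [Xxi [bb [E _]]]]].
    exists (gopp beta). split; [memb |]. symmetry. apply graph_map_unique; [exact aa |].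
    rewrite E. gsimp. exact Xxi.
Qed.

Lemma graph_map_graph : X = graph (graph_map X).
Proof.
  apply functional_extensionality. intro w. apply propositional_extensionality. unfold graph. split.
  - intro Xw. apply graph_map_unique; [memb | rewrite pa_pb; exact Xw].
  - intro E. rewrite <- (pa_pb w), E. exact (proj2 (graph_map_spec _)).
Qed.

End GraphMap.

Lemma graph_map_of_graph {h beta} : is_iso b a h -> b beta -> graph_map (graph h) beta = h beta.
Proof.
  intros Hh bb. symmetry. apply (graph_map_unique (graph_U' Hh)); [memb | exact (graph_mem Hh bb)].
Qed.

Lemma Gamma_graph h1 {h2 h3} : is_iso b a h2 -> is_iso b a h3 ->
  Gamma (graph h1) a (graph h2) b (graph h3) = graph (fun q => h1 (inv_on b h2 (h3 q))).
Proof.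
  intros H2 H3. apply functional_extensionality. intro w. apply propositional_extensionality.
  unfold Gamma, graph. split.
  - intros [alpha [beta [aa [bb [Y [Z X]]]]]].
    rewrite !paD, !pbD, (pa_a aa), (pb_a aa), (pa_b bb), (pb_b bb) in Y.
    rewrite !paD, !pbD, (pa_a aa), (pb_a aa) in Z.
    rewrite !paD, !pbD, (pa_b bb), (pb_b bb) in X.
    gsimpin Y. gsimpin Z. gsimpin X.
    assert (Et : inv_on b h2 (h3 (pb w)) = pb w + beta)
      by (apply (inv_on_eq H2); [memb | congruence]).
    rewrite Et. exact X.
  - intro Ew. destruct (inv_on_spec H2 (iso_map H3 (pb_mem w))) as [bt Et].
    pose (t := inv_on b h2 (h3 (pb w))). fold t in bt, Et, Ew.
    pose (alpha := h3 (pb w) + gopp (pa w)). pose (beta := gopp (pb w) + t).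
    assert (aa : a alpha) by (unfold alpha; memb). assert (bb : b beta) by (unfold beta; memb).
    exists alpha, beta. split; [exact aa | split; [exact bb |]].
    rewrite !paD, !pbD, (pa_a aa), (pb_a aa), (pa_b bb), (pb_b bb). unfold alpha, beta. gsimp.
    split; [exact (eq_sym Et) | split; [reflexivity | exact Ew]].
Qed.

Section Composite.
Context {X Y Z : subset O}.
Hypotheses (UX : U' a b X) (UY : U' a b Y) (UZ : U' a b Z).

Lemma Gamma_map_iso :
  is_iso b a (fun q => graph_map X (inv_on b (graph_map Y) (graph_map Z q))).
Proof.
  exact (iso_comp (graph_map_iso UX) (iso_comp (iso_inv Hb (graph_map_iso UY)) (graph_map_iso UZ))).
Qed.

Lemma Gamma_graph_map :
  Gamma X a Y b Z = graph (fun q => graph_map X (inv_on b (graph_map Y) (graph_map Z q))).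
Proof.
  rewrite <- (Gamma_graph (graph_map X) (graph_map_iso UY) (graph_map_iso UZ)).
  f_equal; apply graph_map_graph; assumption.
Qed.

Lemma Gamma_U' : U' a b (Gamma X a Y b Z).
Proof. rewrite Gamma_graph_map. exact (graph_U' Gamma_map_iso). Qed.

End Composite.

Lemma graph_coordinates {k} : is_iso b a k ->
  is_coordinate_iso a b (graph k) (fun w => (pa w, k (pb w))).
Proof.
  intro Hk. unfold is_coordinate_iso, is_hom_pair. cbn [fst snd].
  split; [| split; [| split; [| split; [| split; [| split]]]]].
  - intros u v. rewrite paD, pbD, (iso_add Hk) by memb. reflexivity.
  - intros u v E. injection E as E1 E2. apply (iso_inj Hk (pb_mem u) (pb_mem v)) in E2.
    rewrite <- (pa_pb u), <- (pa_pb v), E1, E2. reflexivity.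
  - intro w. split; memb.
  - intros p q ap aq. destruct (iso_surj Hk aq) as [t [bt Et]].
    exists (p + t). destruct (pa_pb_add ap bt) as [-> ->]. rewrite Et. reflexivity.
  - intro w. rewrite <- (iso_zero Hb Hk). split.
    + intro aw. rewrite (pb_a aw). reflexivity.
    + intro E. apply (iso_inj Hk (pb_mem w) (subgroup0 Hb)) in E.
      rewrite <- (pa_pb w), E, gadd0r. memb.
  - intro w. split; [exact pa_b |]. intro E. rewrite <- (pa_pb w), E, gadd0l. memb.
  - intro w. reflexivity.
Qed.

Definition torsor_aut c X : O -> O := fun u => graph_map X (inv_on b (graph_map c) u).

Section Torsor.
Context {c : subset O}.
Hypothesis Uc : U' a b c.
Let Hk : is_iso b a (graph_map c) := graph_map_iso Uc.

Lemma torsor_aut_is_aut {X} : U' a b X -> is_aut_of a (torsor_aut c X).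
Proof. intro UX. exact (iso_comp (graph_map_iso UX) (iso_inv Hb Hk)). Qed.

Lemma torsor_aut_inj {X Y} : U' a b X -> U' a b Y ->
  (forall u, a u -> torsor_aut c X u = torsor_aut c Y u) -> X = Y.
Proof.
  intros UX UY E. rewrite (graph_map_graph UX), (graph_map_graph UY). apply graph_ext.
  intros beta bb. specialize (E _ (iso_map Hk bb)). unfold torsor_aut in E.
  rewrite (inv_on_eq Hk bb eq_refl) in E. exact E.
Qed.

Lemma torsor_aut_surj f : is_aut_of a f ->
  exists X, U' a b X /\ forall u, a u -> torsor_aut c X u = f u.
Proof.
  intro Hf. assert (Hfk : is_iso b a (fun beta => f (graph_map c beta))) by exact (iso_comp Hf Hk).
  exists (graph (fun beta => f (graph_map c beta))). split; [exact (graph_U' Hfk) |].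
  intros u au. unfold torsor_aut. destruct (inv_on_spec Hk au) as [bi Ei].
  rewrite (graph_map_of_graph Hfk bi). cbv beta. rewrite Ei. reflexivity.
Qed.

Lemma torsor_aut_Gamma {X Z} : U' a b X -> U' a b Z ->
  forall u, a u -> torsor_aut c (Gamma X a c b Z) u = torsor_aut c X (torsor_aut c Z u).
Proof.
  intros UX UZ u au. unfold torsor_aut at 1. rewrite (Gamma_graph_map UX Uc UZ).
  rewrite (graph_map_of_graph (Gamma_map_iso UX Uc UZ) (proj1 (inv_on_spec Hk au))).
  reflexivity.
Qed.

End Torsor.

End DirectProduct.

Theorem theorem4p6 (O : Grp) (a b c : subset O) :
  is_subgroup a -> is_subgroup b -> is_subgroup c ->
  top a b ->
  (forall alpha beta, a alpha -> b beta -> alpha + beta = beta + alpha) ->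
  ( (top b c /\ top c a) <->
    (exists phi : O -> O * O,
       is_hom_pair phi /\
       (forall u v, phi u = phi v -> u = v) /\
       (forall w, a (fst (phi w)) /\ a (snd (phi w))) /\
       (forall p q, a p -> a q -> exists w, phi w = (p, q)) /\
       (forall w, a w <-> snd (phi w) = gzero) /\
       (forall w, b w <-> fst (phi w) = gzero) /\
       (forall w, c w <-> fst (phi w) = snd (phi w))) ) /\
  ( (top b c /\ top c a) ->
    U' a b c /\
    (forall x y z, U' a b x -> U' a b y -> U' a b z -> U' a b (Gamma x a y b z)) /\
    (exists Psi : subset O -> (O -> O),
       (forall x, U' a b x -> is_aut_of a (Psi x)) /\
       (forall x y, U' a b x -> U' a b y ->
          (forall u, a u -> Psi x u = Psi y u) -> x = y) /\
       (forall f, is_aut_of a f -> exists x, U' a b x /\ forall u, a u -> Psi x u = f u) /\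
       (forall x z, U' a b x -> U' a b z ->
          forall u, a u -> Psi (Gamma x a c b z) u = Psi x (Psi z u))) ).
Proof.
  intros Ha Hb Hc Tab Hcomm.
  assert (coords : top b c /\ top c a <-> exists phi, is_coordinate_iso a b c phi).
  { split.
    - intros [Tbc Tca]. pose proof (U'_of_tops Ha Hb Hc Tbc Tca) as Uc.
      pose proof (graph_coordinates Ha Hb Tab Hcomm (graph_map_iso Ha Hb Hcomm Uc)) as H.
      rewrite <- (graph_map_graph Ha Tab Uc) in H. eexists. exact H.
    - intros [phi Hphi].
      exact (conj (coordinates_top_b_c Ha Hb Hc Hphi) (coordinates_top_c_a Ha Hc Hphi)). }
  split; [exact coords |].
  intros [Tbc Tca]. pose proof (U'_of_tops Ha Hb Hc Tbc Tca) as Uc.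
  split; [exact Uc | split].
  - intros x y z Ux Uy Uz. exact (Gamma_U' Ha Hb Tab Hcomm Ux Uy Uz).
  - exists (torsor_aut (a := a) (b := b) c). split; [| split; [| split]].
    + intros x Ux. exact (torsor_aut_is_aut Ha Hb Hcomm Uc Ux).
    + intros x y Ux Uy. exact (torsor_aut_inj Ha Hb Tab Hcomm Uc Ux Uy).
    + exact (torsor_aut_surj Ha Hb Tab Hcomm Uc).
    + intros x z Ux Uz. exact (torsor_aut_Gamma Ha Hb Tab Hcomm Uc Ux Uz).
Qed.
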